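(* There exists a decreasing sequence of elements of $\mathcal{D}_0$ with limit $\sqrt3$.
   Context: For an infinite word $w$ (over any alphabet) with infinitely many palindromic prefixes (the empty word counting as one), let $(n_i)_{i\ge1}$ be the increasing sequence of their lengths and $\delta(w)=\limsup n_{i+1}/n_i$. $w$ has abundant palindromic prefixes if it has infinitely many palindromic prefixes and $n_{i+1}\le2n_i+1$ for all $i\ge1$. $\mathcal{D}_0$ is the set of values $\delta(w)$ over all words $w$ with abundant palindromic prefixes. *)

From Stdlib Require Import Reals Lra Lia.
From Coquelicot Require Import Coquelicot.
Open Scope R_scope.

Definition pal_prefix {A : Type} (w : nat -> A) (n : nat) : Prop :=
  forall i : nat, (i < n)%nat -> w i = w (n - 1 - i)%nat.

(* n enumerates, in increasing order, exactly the lengths of the palindromic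
   prefixes of w (0-indexed here: n 0 = 0 is the empty prefix).  Existence of
   such an n means w has infinitely many palindromic prefixes. *)
Definition pal_lengths {A : Type} (w : nat -> A) (n : nat -> nat) : Prop :=
  (forall i : nat, (n i < n (S i))%nat) /\
  (forall m : nat, pal_prefix w m <-> exists i : nat, n i = m).

Definition abundant_with {A : Type} (w : nat -> A) (n : nat -> nat) : Prop :=
  pal_lengths w n /\ (forall i : nat, (n (S i) <= 2 * n i + 1)%nat).

Definition delta_is {A : Type} (w : nat -> A) (n : nat -> nat) (d : Rbar) : Prop :=
  pal_lengths w n /\ is_LimSup_seq (fun i => INR (n (S i)) / INR (n i)) d.

Definition D0 (d : R) : Prop :=
  exists (A : Type) (w : nat -> A) (n : nat -> nat),
    abundant_with w n /\ delta_is w n (Finite d).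

(* Each word is built by palindromic extension: its palindromic prefix of length
   n_{k+1} arises from the one of length n_k either by a fresh central letter
   (n_{k+1} = 2 n_k + 1) or by reflection through an earlier palindromic prefix
   (n_{k+1} = 2 n_k - n_j), and a condition on the letters at the positions n_j
   guarantees that no other palindromic prefix appears.  In the m-th word the
   offsets k - j come in blocks: a growing run of 2's, then m periods (1,3,2) and
   one (1,3,3).  The ratios r_k = n_{k+1}/n_k satisfy
   r_k = 2 - 1/(r_{k-1} ... r_j); the runs of 2's contract them to the golden
   ratio φ, after which, along a block, they converge to (2+u_t)/(1+u_t),
   u_{t+1}, 1 + 1/u_{t+1} and finally 3/u_{m+1}, where u_0 = φ and
   u_{t+1} = (3 + 2 u_t)/(2 + u_t) increases to √3.  So δ = 3/u_{m+1}, and this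
   decreases to 3/√3 = √3 as m grows. *)

From Stdlib Require Import Reals Lra Lia Arith.
From Coquelicot Require Import Coquelicot.
Open Scope R_scope.

(** * Palindromic extension *)

Section PalindromicPrefixes.
Local Open Scope nat_scope.
Context {A : Type} (w : nat -> A).

Lemma pal_prefix_reflect M N :
  pal_prefix w M -> pal_prefix w N -> M <= N <= 2 * M -> pal_prefix w (2 * M - N).
Proof.
  intros HM HN HMN t Ht.
  rewrite (HM t), (HN (M - 1 - t)), (HM (N - 1 - (M - 1 - t))) by lia.
  f_equal; lia.
Qed.

Lemma pal_prefix_reflect_letter M N :
  pal_prefix w M -> pal_prefix w N -> M < N <= 2 * M -> w (2 * M - N) = w M.
Proof.
  intros HM HN HMN.
  rewrite (HM (2 * M - N)), (HN (M - 1 - (2 * M - N))) by lia.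
  f_equal; lia.
Qed.

Lemma pal_prefix_extend M N :
  pal_prefix w M -> pal_prefix w (2 * M - N) -> M <= N <= 2 * M + 1 ->
  (forall t, M <= t < N -> w t = w (N - 1 - t)) -> pal_prefix w N.
Proof.
  intros HM HJ HMN Hmirror t Ht.
  destruct (Nat.le_gt_cases M t) as [Hle | Hlt]; [now apply Hmirror|].
  destruct (Nat.le_gt_cases M (N - 1 - t)) as [Hle' | Hlt'].
  - rewrite (Hmirror (N - 1 - t)) by lia. f_equal; lia.
  - rewrite (HM t), (HM (N - 1 - t)), (HJ (M - 1 - t)) by lia.
    f_equal; lia.
Qed.

End PalindromicPrefixes.

Section PalindromicExtension.
Local Open Scope nat_scope.
Variables (n : nat -> nat) (fresh : nat -> bool) (base : nat -> nat).
Hypothesis n_0 : n 0 = 0.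
Hypothesis n_fresh : forall k, fresh k = true -> n (S k) = 2 * n k + 1.
Hypothesis n_reflect :
  forall k, fresh k = false -> base k < k /\ n (S k) = 2 * n k - n (base k).

Lemma n_strict_mono j k : j < k -> n j < n k.
Proof.
  revert j. induction k as [k IH] using lt_wf_ind; intros j Hj.
  destruct k as [|k]; [lia|].
  assert (Hk : n k < n (S k)).
  { destruct (fresh k) eqn:E; [rewrite (n_fresh k E); lia|].
    destruct (n_reflect k E) as [Hb Hn].
    assert (n (base k) < n k) by (apply IH; lia). lia. }
  destruct (Nat.eq_dec j k) as [->|]; [exact Hk|].
  assert (n j < n k) by (apply IH; lia). lia.
Qed.

Lemma n_reflect_sum k :
  fresh k = false -> base k < k /\ n (S k) + n (base k) = 2 * n k.
Proof.
  intros E. destruct (n_reflect k E) as [Hb Hn].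
  pose proof (n_strict_mono (base k) k Hb). split; lia.
Qed.

Lemma n_lt_inj j k : n j < n k -> j < k.
Proof.
  intros H. destruct (Nat.lt_ge_cases j k) as [|Hkj]; [assumption|].
  destruct (Nat.eq_dec j k) as [->|]; [lia|].
  pose proof (n_strict_mono k j ltac:(lia)). lia.
Qed.

Lemma n_succ_le k : n (S k) <= 2 * n k + 1.
Proof.
  destruct (fresh k) eqn:E; [rewrite (n_fresh k E); lia|].
  destruct (n_reflect_sum k E); lia.
Qed.

Fixpoint level (p : nat) : nat :=
  match p with
  | 0 => 0
  | S p' => if n (S (level p')) <=? S p' then S (level p') else level p'
  end.

Lemma level_spec p : n (level p) <= p < n (S (level p)).
Proof.
  induction p as [|p IH]; simpl.
  - rewrite n_0. pose proof (n_strict_mono 0 1 ltac:(lia)). lia.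
  - destruct (Nat.leb_spec (n (S (level p))) (S p)); [|lia].
    pose proof (n_strict_mono (S (level p)) (S (S (level p))) ltac:(lia)). lia.
Qed.

Lemma level_unique p k : n k <= p < n (S k) -> level p = k.
Proof.
  intros Hk. pose proof (level_spec p).
  assert (level p < S k) by (apply n_lt_inj; lia).
  assert (k < S (level p)) by (apply n_lt_inj; lia).
  lia.
Qed.

Definition is_center (k p : nat) : bool := fresh k && (p =? n k).

Lemma mirror_lt p : is_center (level p) p = false -> n (S (level p)) - 1 - p < p.
Proof.
  intros Hc. pose proof (level_spec p) as Hp. set (k := level p) in *.
  unfold is_center in Hc. destruct (fresh k) eqn:E; simpl in Hc.
  - apply Nat.eqb_neq in Hc. rewrite (n_fresh k E) in *. lia.
  - destruct (n_reflect_sum k E) as [Hb Hn].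
    pose proof (n_strict_mono (base k) k Hb). lia.
Qed.

(* The letter at position [p] is found by mirroring [p] inside the palindrome
   of length [n (S (level p))] until it hits the center of a fresh step; the
   fuel [S p] suffices because mirroring strictly decreases the position. *)
Fixpoint letter (fuel p : nat) : nat :=
  match fuel with
  | 0 => 0
  | S f =>
      let k := level p in
      if is_center k p then k else letter f (n (S k) - 1 - p)
  end.

Definition word (p : nat) : nat := letter (S p) p.

Lemma letter_fuel f p : p < f -> letter f p = word p.
Proof.
  revert p. induction f as [f IH] using lt_wf_ind; intros p Hp.
  destruct f as [|f]; [lia|]. unfold word; simpl.
  destruct (is_center (level p) p) eqn:E; [reflexivity|].
  pose proof (mirror_lt p E).
  destruct p as [|p]; [lia|].
  rewrite (IH f), (IH (S p)) by lia. reflexivity.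
Qed.

Lemma word_mirror k p : n k <= p < n (S k) -> is_center k p = false ->
  word p = word (n (S k) - 1 - p).
Proof.
  intros Hp Hc. pose proof (level_unique p k Hp) as Hl.
  pose proof (mirror_lt p) as Hm. rewrite Hl in Hm.
  unfold word at 1; simpl. rewrite Hl, Hc.
  apply letter_fuel. specialize (Hm Hc). lia.
Qed.

Lemma word_center k : fresh k = true -> word (n k) = k.
Proof.
  intros E. pose proof (n_strict_mono k (S k) ltac:(lia)).
  assert (Hl : level (n k) = k) by (apply level_unique; lia).
  unfold word; simpl. unfold is_center. rewrite Hl, E, Nat.eqb_refl. reflexivity.
Qed.

Lemma pal_prefix_n k : pal_prefix word (n k).
Proof.
  induction k as [k IH] using lt_wf_ind. destruct k as [|k].
  { intros t Ht. rewrite n_0 in Ht. lia. }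
  pose proof (n_strict_mono k (S k) ltac:(lia)). pose proof (n_succ_le k).
  apply (pal_prefix_extend _ (n k)); [apply IH; lia | | lia |].
  - destruct (fresh k) eqn:E.
    + rewrite (n_fresh k E). intros t Ht. lia.
    + destruct (n_reflect_sum k E) as [Hb Hn].
      replace (2 * n k - n (S k)) with (n (base k)) by lia. apply IH; lia.
  - intros t Ht. destruct (is_center k t) eqn:Hc; [|now apply word_mirror].
    unfold is_center in Hc. apply andb_prop in Hc as [E Ht'].
    apply Nat.eqb_eq in Ht'. rewrite (n_fresh k E). f_equal. lia.
Qed.

Lemma word_n_reflect k : fresh k = false -> word (n k) = word (n (base k)).
Proof.
  intros E. destruct (n_reflect_sum k E) as [Hb Hn].
  pose proof (n_strict_mono (base k) k Hb). pose proof (n_strict_mono k (S k) ltac:(lia)).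
  rewrite (word_mirror k (n k)) by (try lia; unfold is_center; now rewrite E).
  rewrite (pal_prefix_n k) by lia. f_equal. lia.
Qed.

Lemma word_n_le k : word (n k) <= k.
Proof.
  induction k as [k IH] using lt_wf_ind.
  destruct (fresh k) eqn:E; [rewrite (word_center k E); lia|].
  rewrite word_n_reflect by exact E.
  destruct (n_reflect_sum k E) as [Hb _]. specialize (IH (base k) Hb). lia.
Qed.

(* A palindromic prefix of length [p] with [n k < p < n (S k)] would yield
   palindromic prefixes of lengths [2 n k - p = n j] (with the letter of [n k]
   at [n j]) and [2 p - n (S k) = n l]; this hypothesis excludes that. *)
Hypothesis no_extra_center : forall k, fresh k = false -> forall j l,
  base k < j < k -> base k < l <= k -> word (n j) = word (n k) ->
  n l + 2 * n j <> 2 * n k + n (base k).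

Lemma pal_prefix_only_n p : pal_prefix word p -> exists k, n k = p.
Proof.
  induction p as [p IH] using lt_wf_ind. intros Hp.
  pose proof (level_spec p) as Hk. set (k := level p) in *.
  destruct (Nat.eq_dec (n k) p) as [|Hne]; [now exists k|]. exfalso.
  pose proof (n_succ_le k). pose proof (pal_prefix_n k) as Pk.
  destruct (IH (2 * n k - p) ltac:(lia)) as [j Hj].
  { apply pal_prefix_reflect; auto; lia. }
  assert (Lj : word (n j) = word (n k))
    by (rewrite Hj; apply pal_prefix_reflect_letter; auto; lia).
  assert (Hjk : j < k) by (apply n_lt_inj; lia).
  destruct (fresh k) eqn:E.
  - rewrite (word_center k E) in Lj. pose proof (word_n_le j). lia.
  - destruct (n_reflect_sum k E) as [Hb Hn].
    destruct (IH (2 * p - n (S k)) ltac:(lia)) as [l Hl].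
    { apply pal_prefix_reflect; [exact Hp | apply pal_prefix_n | lia]. }
    assert (base k < l) by (apply n_lt_inj; lia).
    assert (l < S k) by (apply n_lt_inj; lia).
    assert (base k < j) by (apply n_lt_inj; lia).
    apply (no_extra_center k E j l); auto; lia.
Qed.

End PalindromicExtension.

(** * The family of words *)

Section Family.
Local Open Scope nat_scope.
Variable m : nat.

(* From step 2 on, the offsets [k - base k] are arranged in blocks [s = 0, 1, ...]:
   [fib_len s] offsets 2, then [m] periods [1; 3; 2], then [1; 3; 3]. *)
Definition fib_len (s : nat) : nat := s + 6.
Definition block_len (s : nat) : nat := fib_len s + 3 * m + 3.

Fixpoint block_start (s : nat) : nat :=
  match s with
  | 0 => 2
  | S s' => block_start s' + block_len s'
  end.

Definition window (s : nat) : nat := block_start s + fib_len s.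

Fixpoint block_coord (j : nat) : nat * nat :=
  match j with
  | 0 => (0, 0)
  | S j' => let (s, q) := block_coord j' in
            if S q <? block_len s then (s, S q) else (S s, 0)
  end.

Definition block_offset (s q : nat) : nat :=
  if q <? fib_len s then 2 else
  let i := q - fib_len s in
  match i mod 3 with
  | 0 => 1
  | 1 => 3
  | _ => if i / 3 <? m then 2 else 3
  end.

Definition offset (k : nat) : nat := let (s, q) := block_coord (k - 2) in block_offset s q.

Lemma block_start_ge s : 2 + s <= block_start s.
Proof. induction s; simpl; unfold block_len; lia. Qed.

Lemma block_start_mono s s' : s <= s' -> block_start s <= block_start s'.
Proof. induction 1; simpl; lia. Qed.

Lemma block_start_succ s : block_start (S s) = window s + 3 * m + 3.
Proof. simpl. unfold window, block_len. lia. Qed.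

Lemma block_coord_succ j : block_coord (S j) =
  let (s, q) := block_coord j in if S q <? block_len s then (s, S q) else (S s, 0).
Proof. reflexivity. Qed.

Lemma block_coord_start s q :
  q < block_len s -> block_coord (block_start s - 2 + q) = (s, q).
Proof.
  pose proof (block_start_ge s).
  revert q; induction s as [|s IHs]; intro q; induction q as [|q IHq]; intro Hq.
  - reflexivity.
  - replace (block_start 0 - 2 + S q) with (S (block_start 0 - 2 + q)) by lia.
    rewrite block_coord_succ, IHq by lia.
    destruct (Nat.ltb_spec (S q) (block_len 0)); [reflexivity | lia].
  - pose proof (block_start_ge s).
    replace (block_start (S s) - 2 + 0) with (S (block_start s - 2 + (block_len s - 1)))
      by (simpl; unfold block_len in *; lia).
    rewrite block_coord_succ, IHs by (unfold block_len; lia).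
    destruct (Nat.ltb_spec (S (block_len s - 1)) (block_len s));
      [unfold block_len in *; lia | reflexivity].
  - replace (block_start (S s) - 2 + S q) with (S (block_start (S s) - 2 + q)) by lia.
    rewrite block_coord_succ, IHq by lia.
    destruct (Nat.ltb_spec (S q) (block_len (S s))); [reflexivity | lia].
Qed.

Lemma block_coord_spec j :
  let (s, q) := block_coord j in q < block_len s /\ j = block_start s - 2 + q.
Proof.
  induction j as [|j IH]; [simpl; unfold block_len; lia|].
  simpl. destruct (block_coord j) as [s q].
  pose proof (block_start_ge s).
  destruct (Nat.ltb_spec (S q) (block_len s)); simpl; unfold block_len in *; lia.
Qed.

Lemma offset_at s q : q < block_len s -> offset (block_start s + q) = block_offset s q.
Proof.
  intros Hq. unfold offset. pose proof (block_start_ge s).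
  replace (block_start s + q - 2) with (block_start s - 2 + q) by lia.
  now rewrite block_coord_start.
Qed.

Lemma position_cases k : 2 <= k -> exists s,
  (exists q, q < fib_len s /\ k = block_start s + q) \/
  (exists t r, t <= m /\ r < 3 /\ k = window s + 3 * t + r).
Proof.
  intros Hk. pose proof (block_coord_spec (k - 2)) as Hc.
  destruct (block_coord (k - 2)) as [s q]. destruct Hc as [Hq Hj].
  pose proof (block_start_ge s). exists s.
  destruct (Nat.lt_ge_cases q (fib_len s)); [left; exists q; lia | right].
  exists ((q - fib_len s) / 3), ((q - fib_len s) mod 3).
  pose proof (Nat.div_mod (q - fib_len s) 3 ltac:(lia)).
  pose proof (Nat.mod_upper_bound (q - fib_len s) 3 ltac:(lia)).
  unfold window, block_len in *. lia.
Qed.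

Lemma offset_range k : 1 <= offset k <= 3.
Proof.
  unfold offset, block_offset. destruct (block_coord (k - 2)) as [s q].
  destruct (q <? fib_len s); [lia|].
  destruct ((q - fib_len s) mod 3) as [|[|]]; [lia | lia |].
  destruct (_ <? m); lia.
Qed.

Lemma offset_fib s q : q < fib_len s -> offset (block_start s + q) = 2.
Proof.
  intros Hq. rewrite offset_at by (unfold block_len; lia).
  unfold block_offset. now apply Nat.ltb_lt in Hq as ->.
Qed.

Lemma offset_window s t r : t <= m -> r < 3 ->
  offset (window s + 3 * t + r) =
  match r with 0 => 1 | 1 => 3 | _ => if t <? m then 2 else 3 end.
Proof.
  intros Ht Hr. unfold window.
  rewrite <- !Nat.add_assoc, offset_at by (unfold block_len; lia).
  unfold block_offset. destruct (Nat.ltb_spec (fib_len s + (3 * t + r)) (fib_len s)); [lia|].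
  replace (fib_len s + (3 * t + r) - fib_len s) with (r + t * 3) by lia.
  rewrite Nat.div_add, Nat.Div0.mod_add, Nat.div_small, Nat.mod_small by lia.
  destruct r as [|[|[|]]]; reflexivity || lia.
Qed.

Lemma offset_window_0 s t : t <= m -> offset (window s + 3 * t) = 1.
Proof.
  intros Ht. rewrite <- (Nat.add_0_r (window s + 3 * t)). apply offset_window; lia.
Qed.

Lemma offset_window_1 s t : t <= m -> offset (window s + 3 * t + 1) = 3.
Proof. intros Ht. apply offset_window; lia. Qed.

Lemma offset_window_2 s t : t < m -> offset (window s + 3 * t + 2) = 2.
Proof.
  intros Ht. rewrite offset_window by lia. now apply Nat.ltb_lt in Ht as ->.
Qed.

Lemma offset_window_end s : offset (window s + 3 * m + 2) = 3.
Proof. rewrite offset_window by lia. now rewrite Nat.ltb_irrefl. Qed.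

Lemma offset_le k : 2 <= k -> offset k <= k.
Proof.
  intros Hk. pose proof (offset_range k).
  destruct (Nat.eq_dec k 2) as [->|]; [|lia].
  change (offset 2) with (offset (block_start 0 + 0)). rewrite offset_fib; unfold fib_len; lia.
Qed.

Lemma offset_pred_of_2 k : 3 <= k -> offset k = 2 -> offset (k - 1) <> 1.
Proof.
  intros Hk Ho.
  destruct (position_cases k ltac:(lia)) as [s [[q [Hq ->]] | [t [r [Ht [Hr ->]]]]]].
  - destruct q as [|q].
    + destruct s as [|s]; [simpl in Hk; lia|].
      rewrite block_start_succ.
      replace (window s + 3 * m + 3 + 0 - 1) with (window s + 3 * m + 2) by lia.
      now rewrite offset_window_end.
    + replace (block_start s + S q - 1) with (block_start s + q) by lia.
      rewrite offset_fib by lia. lia.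
  - rewrite offset_window in Ho by lia.
    destruct r as [|[|[|]]]; try lia.
    replace (window s + 3 * t + 2 - 1) with (window s + 3 * t + 1) by lia.
    rewrite offset_window_1 by lia. lia.
Qed.

(* Offsets never exceed 3, so the recursion only needs the last four lengths. *)
Definition next_len (k : nat) (x : nat * nat * nat * nat) : nat :=
  let '(a, b, c, d) := x in
  if k <? 2 then 2 * d + 1 else
  match offset k with 1 => 2 * d - c | 2 => 2 * d - b | _ => 2 * d - a end.

Fixpoint last_lens (k : nat) : nat * nat * nat * nat :=
  match k with
  | 0 => (0, 0, 0, 0)
  | S k' => let '(a, b, c, d) := last_lens k' in (b, c, d, next_len k' (a, b, c, d))
  end.

Definition len (k : nat) : nat := let '(_, _, _, d) := last_lens k in d.

Lemma last_lens_eq k : last_lens k = (len (k - 3), len (k - 2), len (k - 1), len k).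
Proof.
  induction k as [|k IH]; [reflexivity|].
  unfold len at 4. simpl last_lens. rewrite IH.
  replace (S k - 3) with (k - 2) by lia. replace (S k - 2) with (k - 1) by lia.
  replace (S k - 1) with k by lia. reflexivity.
Qed.

Definition fresh_step (k : nat) : bool := k <? 2.
Definition base_step (k : nat) : nat := k - offset k.

Lemma len_0 : len 0 = 0.
Proof. reflexivity. Qed.

Lemma len_fresh k : fresh_step k = true -> len (S k) = 2 * len k + 1.
Proof.
  intros E. unfold len at 1. simpl last_lens. rewrite last_lens_eq.
  unfold fresh_step in E. simpl. now rewrite E.
Qed.

Lemma len_reflect k :
  fresh_step k = false -> base_step k < k /\ len (S k) = 2 * len k - len (base_step k).
Proof.
  intros E. unfold fresh_step in E. apply Nat.ltb_ge in E.
  pose proof (offset_range k). pose proof (offset_le k E).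
  split; unfold base_step; [lia|].
  unfold len at 1. simpl last_lens. rewrite last_lens_eq. simpl.
  destruct (Nat.ltb_spec k 2); [lia|].
  destruct (offset k) as [|[|[|[|]]]]; lia || reflexivity.
Qed.

Lemma len_strict_mono j k : j < k -> len j < len k.
Proof. exact (n_strict_mono len fresh_step base_step len_0 len_fresh len_reflect j k). Qed.

Definition fam_word : nat -> nat := word len fresh_step.

Definition letter_after (k : nat) : nat := fam_word (len k).

Lemma letter_after_base k : 2 <= k -> letter_after k = letter_after (k - offset k).
Proof.
  intros Hk. apply (word_n_reflect len fresh_step base_step len_0 len_fresh len_reflect).
  now apply Nat.ltb_ge.
Qed.

Lemma letter_after_1_0 : letter_after 1 <> letter_after 0.
Proof.
  unfold letter_after, fam_word.
  now rewrite !(word_center len fresh_step base_step len_0 len_fresh len_reflect).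
Qed.

Hypothesis m_pos : 1 <= m.

Lemma offset_preds_of_3 k : 2 <= k -> offset k = 3 -> 6 <= k /\
  ((offset (k - 1) = 1 /\ offset (k - 2) = 2) \/
   (offset (k - 1) = 3 /\ offset (k - 2) = 1 /\ offset (k - 3) = 2)).
Proof.
  intros Hk Ho. destruct (position_cases k Hk) as [s [[q [Hq ->]] | [t [r [Ht [Hr ->]]]]]].
  { rewrite offset_fib in Ho by lia. lia. }
  pose proof (block_start_ge s). split; [unfold window, fib_len; lia|].
  rewrite offset_window in Ho by lia.
  destruct r as [|[|[|]]]; try lia.
  - left. replace (window s + 3 * t + 1 - 1) with (window s + 3 * t) by lia.
    rewrite offset_window_0 by lia. split; [reflexivity|].
    destruct t as [|t].
    + replace (window s + 3 * 0 + 1 - 2) with (block_start s + (fib_len s - 1))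
        by (unfold window, fib_len; lia).
      apply offset_fib. unfold fib_len; lia.
    + replace (window s + 3 * S t + 1 - 2) with (window s + 3 * t + 2) by lia.
      apply offset_window_2. lia.
  - destruct (Nat.ltb_spec t m); [lia|]. assert (t = m) as -> by lia.
    right. replace (window s + 3 * m + 2 - 1) with (window s + 3 * m + 1) by lia.
    replace (window s + 3 * m + 2 - 2) with (window s + 3 * m) by lia.
    replace (window s + 3 * m + 2 - 3) with (window s + 3 * (m - 1) + 2) by lia.
    rewrite offset_window_1, offset_window_0, offset_window_2 by lia. auto.
Qed.

Lemma letter_after_eq_pred k :
  1 <= k -> letter_after k = letter_after (k - 1) <-> 2 <= k /\ offset k = 1.
Proof.
  induction k as [k IH] using lt_wf_ind. intros Hk.
  destruct (Nat.eq_dec k 1) as [->|Hk1].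
  { split; [intro H; exfalso; now apply letter_after_1_0 | lia]. }
  pose proof (offset_range k) as Hr.
  rewrite (letter_after_base k) by lia.
  destruct (offset k) as [|[|[|[|]]]] eqn:Ho; try lia; split; try lia; intros H; exfalso.
  - destruct (Nat.eq_dec k 2) as [->|Hk2]; [now apply letter_after_1_0|].
    apply (offset_pred_of_2 k); [lia | exact Ho|].
    apply (IH (k - 1)); [lia | lia |]. replace (k - 1 - 1) with (k - 2) by lia. now symmetry.
  - destruct (offset_preds_of_3 k ltac:(lia) Ho) as [Hk6 [[P1 P2] | [P1 [P2 P3]]]].
    + assert (L1 : letter_after (k - 1) = letter_after (k - 2)).
      { replace (k - 2) with (k - 1 - 1) by lia. apply IH; lia. }
      assert (L2 : letter_after (k - 2) <> letter_after (k - 3)).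
      { replace (k - 3) with (k - 2 - 1) by lia. rewrite IH; lia. }
      congruence.
    + assert (L1 : letter_after (k - 1) = letter_after (k - 4)).
      { rewrite letter_after_base, P1 by lia. f_equal. lia. }
      assert (L3 : letter_after (k - 3) <> letter_after (k - 4)).
      { replace (k - 4) with (k - 3 - 1) by lia. rewrite IH; lia. }
      congruence.
Qed.

Lemma fam_no_extra_center k : fresh_step k = false -> forall j l,
  base_step k < j < k -> base_step k < l <= k -> fam_word (len j) = fam_word (len k) ->
  len l + 2 * len j <> 2 * len k + len (base_step k).
Proof.
  intros E j l Hj Hl Hw. fold (letter_after j) (letter_after k) in Hw.
  unfold fresh_step in E. apply Nat.ltb_ge in E. unfold base_step in *.
  pose proof (offset_range k) as Hr.
  assert (Hpred : letter_after k <> letter_after (k - 1)).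
  { rewrite letter_after_eq_pred by lia. intros [_ Ho]. rewrite Ho in Hj. lia. }
  destruct (Nat.eq_dec j (k - 1)) as [->|Hj1]; [congruence|].
  destruct (offset k) as [|[|[|[|]]]] eqn:Ho; try lia.
  assert (j = k - 2) as -> by lia.
  destruct (offset_preds_of_3 k E Ho) as [Hk6 [[P1 P2] | [P1 [P2 P3]]]].
  - exfalso. apply Hpred. rewrite <- Hw. symmetry.
    replace (k - 2) with (k - 1 - 1) by lia. apply letter_after_eq_pred; lia.
  - pose proof (len_reflect (k - 2)) as [_ R2]; [now apply Nat.ltb_ge; lia|].
    unfold base_step in R2. rewrite P2 in R2. replace (S (k - 2)) with (k - 1) in R2 by lia.
    pose proof (len_strict_mono (k - 3) (k - 2) ltac:(lia)).
    pose proof (len_strict_mono (k - 1) k ltac:(lia)).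
    assert (len l <= len k).
    { destruct (Nat.eq_dec l k) as [->|]; [lia|].
      pose proof (len_strict_mono l k ltac:(lia)). lia. }
    replace (k - 2 - 1) with (k - 3) in R2 by lia. lia.
Qed.

Theorem fam_abundant : abundant_with fam_word len.
Proof.
  split; [split|].
  - intro i. apply len_strict_mono. lia.
  - intro p. split.
    + apply (pal_prefix_only_n len fresh_step base_step len_0 len_fresh len_reflect),
        fam_no_extra_center.
    + intros [i <-]. apply (pal_prefix_n len fresh_step base_step len_0 len_fresh len_reflect).
  - intro i. apply (n_succ_le len fresh_step base_step len_0 len_fresh len_reflect).
Qed.

End Family.

(** * Ratios of consecutive lengths *)

Definition in_range (a b x : R) : Prop := a <= x <= b.

Lemma in_range_mult a1 b1 a2 b2 x y : 0 < a1 -> 0 < a2 ->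
  in_range a1 b1 x -> in_range a2 b2 y -> in_range (a1 * a2) (b1 * b2) (x * y).
Proof. intros H1 H2 [Hx1 Hx2] [Hy1 Hy2]. split; apply Rmult_le_compat; lra. Qed.

Lemma in_range_recur_1 a b x lo hi : 0 < a -> in_range a b x ->
  lo <= 2 - / a -> 2 - / b <= hi -> in_range lo hi (2 - / x).
Proof.
  intros Ha [Hx1 Hx2] Hlo Hhi.
  assert (/ x <= / a) by (apply Rinv_le_contravar; lra).
  assert (/ b <= / x) by (apply Rinv_le_contravar; lra).
  split; lra.
Qed.

Lemma in_range_recur_2 a1 b1 a2 b2 x y lo hi : 0 < a1 -> 0 < a2 ->
  in_range a1 b1 x -> in_range a2 b2 y ->
  lo <= 2 - / (a1 * a2) -> 2 - / (b1 * b2) <= hi -> in_range lo hi (2 - / (x * y)).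
Proof.
  intros H1 H2 Hx Hy. apply in_range_recur_1; [nra | now apply in_range_mult].
Qed.

Lemma in_range_recur_3 a1 b1 a2 b2 a3 b3 x y z lo hi : 0 < a1 -> 0 < a2 -> 0 < a3 ->
  in_range a1 b1 x -> in_range a2 b2 y -> in_range a3 b3 z ->
  lo <= 2 - / (a1 * a2 * a3) -> 2 - / (b1 * b2 * b3) <= hi ->
  in_range lo hi (2 - / (x * y * z)).
Proof.
  intros H1 H2 H3 Hx Hy Hz. apply in_range_recur_2; [nra | lra | | exact Hz].
  now apply in_range_mult.
Qed.

Section Ratios.
Variable m : nat.

Definition ratio (k : nat) : R := INR (len m (S k)) / INR (len m k).

Lemma len_pos k : (1 <= k)%nat -> 0 < INR (len m k).
Proof.
  intros Hk. apply lt_0_INR. pose proof (len_strict_mono m 0 k). rewrite len_0 in *. lia.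
Qed.

Lemma ratio_rec k : (2 <= k)%nat -> ratio k = 2 - INR (len m (k - offset m k)) / INR (len m k).
Proof.
  intros Hk. unfold ratio.
  pose proof (len_reflect m k) as [_ Hn]; [now apply Nat.ltb_ge|]. unfold base_step in Hn.
  pose proof (len_strict_mono m (k - offset m k) k) as Hlt.
  pose proof (offset_range m k). specialize (Hlt ltac:(lia)).
  rewrite Hn, minus_INR, mult_INR by lia. pose proof (len_pos k ltac:(lia)).
  simpl INR. field. lra.
Qed.

Lemma ratio_rec_1 k : (4 <= k)%nat -> offset m k = 1%nat -> ratio k = 2 - / ratio (k - 1).
Proof.
  intros Hk Ho. rewrite ratio_rec, Ho by lia. unfold ratio.
  replace (S (k - 1)) with k by lia.
  pose proof (len_pos k ltac:(lia)). pose proof (len_pos (k - 1) ltac:(lia)).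
  field. lra.
Qed.

Lemma ratio_rec_2 k : (4 <= k)%nat -> offset m k = 2%nat ->
  ratio k = 2 - / (ratio (k - 1) * ratio (k - 2)).
Proof.
  intros Hk Ho. rewrite ratio_rec, Ho by lia. unfold ratio.
  replace (S (k - 1)) with k by lia. replace (S (k - 2)) with (k - 1)%nat by lia.
  pose proof (len_pos k ltac:(lia)). pose proof (len_pos (k - 1) ltac:(lia)).
  pose proof (len_pos (k - 2) ltac:(lia)).
  field. lra.
Qed.

Lemma ratio_rec_3 k : (4 <= k)%nat -> offset m k = 3%nat ->
  ratio k = 2 - / (ratio (k - 1) * ratio (k - 2) * ratio (k - 3)).
Proof.
  intros Hk Ho. rewrite ratio_rec, Ho by lia. unfold ratio.
  replace (S (k - 1)) with k by lia. replace (S (k - 2)) with (k - 1)%nat by lia.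
  replace (S (k - 3)) with (k - 2)%nat by lia.
  pose proof (len_pos k ltac:(lia)). pose proof (len_pos (k - 1) ltac:(lia)).
  pose proof (len_pos (k - 2) ltac:(lia)). pose proof (len_pos (k - 3) ltac:(lia)).
  field. lra.
Qed.

Lemma window_ge s : (8 + s <= window m s)%nat.
Proof. pose proof (block_start_ge m s). unfold window, fib_len. lia. Qed.

Lemma ratio_fib s q : (q < fib_len s)%nat -> (4 <= block_start m s + q)%nat ->
  ratio (block_start m s + q) =
  2 - / (ratio (block_start m s + q - 1) * ratio (block_start m s + q - 2)).
Proof. intros Hq Hk. apply ratio_rec_2; [exact Hk | now apply offset_fib]. Qed.

Lemma ratio_window_0 s t : (t <= m)%nat ->
  ratio (window m s + 3 * t) = 2 - / ratio (window m s + 3 * t - 1).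
Proof.
  intros Ht. pose proof (window_ge s).
  apply ratio_rec_1; [lia | now apply offset_window_0].
Qed.

Lemma ratio_window_1 s t : (t <= m)%nat ->
  ratio (window m s + 3 * t + 1) = 2 - / (ratio (window m s + 3 * t) *
    ratio (window m s + 3 * t - 1) * ratio (window m s + 3 * t - 2)).
Proof.
  intros Ht. pose proof (window_ge s).
  rewrite ratio_rec_3 by (lia || now apply offset_window_1).
  replace (window m s + 3 * t + 1 - 1)%nat with (window m s + 3 * t)%nat by lia.
  replace (window m s + 3 * t + 1 - 2)%nat with (window m s + 3 * t - 1)%nat by lia.
  replace (window m s + 3 * t + 1 - 3)%nat with (window m s + 3 * t - 2)%nat by lia.
  reflexivity.
Qed.

Lemma ratio_window_2 s t : (t < m)%nat ->
  ratio (window m s + 3 * t + 2) =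
  2 - / (ratio (window m s + 3 * t + 1) * ratio (window m s + 3 * t)).
Proof.
  intros Ht. pose proof (window_ge s).
  rewrite ratio_rec_2 by (lia || now apply offset_window_2).
  replace (window m s + 3 * t + 2 - 1)%nat with (window m s + 3 * t + 1)%nat by lia.
  replace (window m s + 3 * t + 2 - 2)%nat with (window m s + 3 * t)%nat by lia.
  reflexivity.
Qed.

Lemma ratio_window_end s :
  ratio (window m s + 3 * m + 2) = 2 - / (ratio (window m s + 3 * m + 1) *
    ratio (window m s + 3 * m) * ratio (window m s + 3 * m - 1)).
Proof.
  pose proof (window_ge s).
  rewrite ratio_rec_3 by (lia || apply offset_window_end).
  replace (window m s + 3 * m + 2 - 1)%nat with (window m s + 3 * m + 1)%nat by lia.
  replace (window m s + 3 * m + 2 - 2)%nat with (window m s + 3 * m)%nat by lia.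
  replace (window m s + 3 * m + 2 - 3)%nat with (window m s + 3 * m - 1)%nat by lia.
  reflexivity.
Qed.

(* The ratios stay in boxes: [3/2, 17/10] around the golden ratio during the runs
   of offset 2 and, along a window, boxes around the limits [(2 + u) / (1 + u)],
   [u] and [1 + 1/u] ([φ <= u < √3]) computed further below. *)
Lemma window_step_bounds s t : (t <= m)%nat ->
  in_range (3/2) (17/10) (ratio (window m s + 3 * t - 1)) ->
  in_range (3/2) (177/100) (ratio (window m s + 3 * t - 2)) ->
  in_range (4/3) (24/17) (ratio (window m s + 3 * t)) /\
  in_range (5/3) (177/100) (ratio (window m s + 3 * t + 1)).
Proof.
  intros Ht H1 H2.
  assert (A0 : in_range (4/3) (24/17) (ratio (window m s + 3 * t))).
  { rewrite ratio_window_0 by exact Ht. apply (in_range_recur_1 (3/2) (17/10)); auto; lra. }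
  split; [exact A0|].
  rewrite ratio_window_1 by exact Ht.
  apply (in_range_recur_3 (4/3) (24/17) (3/2) (17/10) (3/2) (177/100)); auto; lra.
Qed.

Lemma window_period_bounds s t : (t <= m)%nat ->
  in_range (3/2) (17/10) (ratio (window m s - 1)) ->
  in_range (3/2) (17/10) (ratio (window m s - 2)) ->
  in_range (3/2) (17/10) (ratio (window m s + 3 * t - 1)) /\
  in_range (3/2) (177/100) (ratio (window m s + 3 * t - 2)).
Proof.
  intros Ht H1 H2. pose proof (window_ge s).
  induction t as [|t IH].
  { rewrite Nat.mul_0_r, Nat.add_0_r. split; [exact H1 | unfold in_range in *; lra]. }
  destruct IH as [I1 I2]; [lia|].
  destruct (window_step_bounds s t ltac:(lia) I1 I2) as [A0 B0].
  replace (window m s + 3 * S t - 1)%nat with (window m s + 3 * t + 2)%nat by lia.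
  replace (window m s + 3 * S t - 2)%nat with (window m s + 3 * t + 1)%nat by lia.
  split; [|unfold in_range in *; lra].
  rewrite ratio_window_2 by lia.
  apply (in_range_recur_2 (5/3) (177/100) (4/3) (24/17)); auto; lra.
Qed.

Lemma window_exit_bounds s :
  in_range (3/2) (17/10) (ratio (window m s - 1)) ->
  in_range (3/2) (17/10) (ratio (window m s - 2)) ->
  in_range (3/2) (17/10) (ratio (block_start m (S s))) /\
  in_range (3/2) (17/10) (ratio (block_start m (S s) + 1)).
Proof.
  intros H1 H2. pose proof (window_ge s).
  destruct (window_period_bounds s m (le_n m) H1 H2) as [I1 I2].
  destruct (window_step_bounds s m (le_n m) I1 I2) as [A0 B0].
  assert (B1 : in_range (5/3) (177/100) (ratio (window m s + 3 * m + 2))).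
  { rewrite ratio_window_end.
    apply (in_range_recur_3 (5/3) (177/100) (4/3) (24/17) (3/2) (17/10)); auto; lra. }
  assert (F0 : in_range (3/2) (17/10) (ratio (block_start m (S s)))).
  { rewrite <- (Nat.add_0_r (block_start m (S s))), ratio_fib
      by (unfold fib_len; rewrite ?block_start_succ; lia).
    rewrite block_start_succ.
    replace (window m s + 3 * m + 3 + 0 - 1)%nat with (window m s + 3 * m + 2)%nat by lia.
    replace (window m s + 3 * m + 3 + 0 - 2)%nat with (window m s + 3 * m + 1)%nat by lia.
    apply (in_range_recur_2 (5/3) (177/100) (5/3) (177/100)); auto; lra. }
  split; [exact F0|].
  rewrite ratio_fib by (unfold fib_len; rewrite ?block_start_succ; lia).
  rewrite block_start_succ in *.
  replace (window m s + 3 * m + 3 + 1 - 1)%nat with (window m s + 3 * m + 3)%nat by lia.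
  replace (window m s + 3 * m + 3 + 1 - 2)%nat with (window m s + 3 * m + 2)%nat by lia.
  apply (in_range_recur_2 (3/2) (17/10) (5/3) (177/100)); auto; lra.
Qed.

Lemma ratio_value k a b : len m (S k) = a -> len m k = b -> ratio k = INR a / INR b.
Proof. intros Ha Hb. unfold ratio. now rewrite Ha, Hb. Qed.

Lemma fib_ratio_bounds s q : (s = 0 -> 3 <= q)%nat -> (q < fib_len s)%nat ->
  in_range (3/2) (17/10) (ratio (block_start m s + q)).
Proof.
  revert q. induction s as [|s IH]; intros q Hs Hq.
  - specialize (Hs eq_refl). unfold fib_len in Hq.
    assert (q = 3 \/ q = 4 \/ q = 5)%nat as [-> | [-> | ->]] by lia.
    + rewrite (ratio_value (block_start m 0 + 3) 32 19) by reflexivity. split; simpl; lra.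
    + rewrite (ratio_value (block_start m 0 + 4) 53 32) by reflexivity. split; simpl; lra.
    + rewrite (ratio_value (block_start m 0 + 5) 87 53) by reflexivity. split; simpl; lra.
  - pose proof (window_ge s).
    assert (E : forall d, (1 <= d <= 2)%nat ->
               (window m s - d = block_start m s + (fib_len s - d))%nat)
      by (unfold window, fib_len; lia).
    destruct (window_exit_bounds s) as [F0 F1];
      [rewrite E by lia; apply IH; unfold fib_len; lia ..|].
    clear Hs. induction q as [q IHq] using lt_wf_ind.
    destruct q as [|[|q]]; [now rewrite Nat.add_0_r | exact F1|].
    pose proof (block_start_ge m (S s)).
    rewrite ratio_fib by lia.
    replace (block_start m (S s) + S (S q) - 1)%nat with (block_start m (S s) + S q)%nat by lia.
    replace (block_start m (S s) + S (S q) - 2)%nat with (block_start m (S s) + q)%nat by lia.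
    apply (in_range_recur_2 (3/2) (17/10) (3/2) (17/10)); try apply IHq; lia || lra.
Qed.

End Ratios.

(** * Convergence of the ratios *)

Definition phi : R := (1 + sqrt 5) / 2.

Lemma phi_bounds : 1618/1000 < phi < 16181/10000.
Proof.
  pose proof (sqrt_sqrt 5 ltac:(lra)). pose proof (sqrt_pos 5).
  assert (2236/1000 < sqrt 5 < 22362/10000) by (split; nra).
  unfold phi. lra.
Qed.

Lemma phi_sq : phi * phi = phi + 1.
Proof. unfold phi. pose proof (sqrt_sqrt 5 ltac:(lra)). nra. Qed.

Lemma phi_inv : 1 + / phi = phi.
Proof.
  pose proof phi_bounds. pose proof phi_sq.
  apply (Rmult_eq_reg_r phi); [|lra]. rewrite Rmult_plus_distr_r, Rinv_l by lra. lra.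
Qed.

Lemma recur_2_contract x y : in_range (3/2) (17/10) x -> in_range (3/2) (17/10) y ->
  Rabs (2 - / (x * y) - phi) <= 3/5 * Rmax (Rabs (x - phi)) (Rabs (y - phi)).
Proof.
  intros [Hx1 Hx2] [Hy1 Hy2].
  set (M := Rmax (Rabs (x - phi)) (Rabs (y - phi))).
  assert (Mx : Rabs (x - phi) <= M) by apply Rmax_l.
  assert (My : Rabs (y - phi) <= M) by apply Rmax_r.
  apply Rabs_le_between in Mx, My.
  pose proof phi_bounds. pose proof phi_sq.
  assert (Hxy : 0 < x * y) by nra.
  assert (Hfix : 2 - / (phi * phi) = phi).
  { rewrite phi_sq. apply (Rmult_eq_reg_r (phi + 1)); [|lra].
    rewrite Rmult_minus_distr_r, Rinv_l by lra. nra. }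
  replace (2 - / (x * y) - phi) with ((x * y - phi * phi) / (x * y * (phi * phi))).
  2:{ transitivity (/ (phi * phi) - / (x * y)); [field; split; nra | lra]. }
  assert (N : Rabs (x * y - phi * phi) <= (x + phi) * M).
  { replace (x * y - phi * phi) with (x * (y - phi) + phi * (x - phi)) by ring.
    apply Rabs_le. split; nra. }
  rewrite Rabs_div, (Rabs_right (x * y * (phi * phi))) by nra.
  apply (Rmult_le_reg_r (x * y * (phi * phi))); [nra|].
  unfold Rdiv. rewrite Rmult_assoc, Rinv_l, Rmult_1_r by nra.
  assert (x + phi <= 3/5 * (x * y * (phi * phi))) by nra.
  nra.
Qed.

Lemma is_lim_seq_of_dist_le (x e : nat -> R) (L : R) :
  (forall s, Rabs (x s - L) <= e s) -> is_lim_seq e 0 -> is_lim_seq x L.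
Proof.
  intros H He.
  apply is_lim_seq_le_le with (u := fun s => L - e s) (w := fun s => L + e s).
  - intro s. now apply Rabs_le_between'.
  - pose proof (is_lim_seq_minus' (fun _ => L) e L 0 (is_lim_seq_const L) He) as H1.
    now rewrite Rminus_0_r in H1.
  - pose proof (is_lim_seq_plus' (fun _ => L) e L 0 (is_lim_seq_const L) He) as H1.
    now rewrite Rplus_0_r in H1.
Qed.

Lemma is_lim_seq_Rinv (x : nat -> R) (a : R) : is_lim_seq x a -> a <> 0 ->
  is_lim_seq (fun s => / x s) (/ a).
Proof. intros H Ha. apply (is_lim_seq_inv x a H). intros E. apply Ha. now injection E. Qed.

Lemma is_lim_seq_two_sub_inv (x : nat -> R) (a : R) : is_lim_seq x a -> a <> 0 ->
  is_lim_seq (fun s => 2 - / x s) (2 - / a).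
Proof.
  intros H Ha. apply (is_lim_seq_minus' (fun _ => 2)); [apply is_lim_seq_const|].
  now apply is_lim_seq_Rinv.
Qed.

Section FibonacciPhase.
Variable m : nat.

Lemma fib_ratio_near_phi s q : (1 <= s)%nat -> (q < fib_len s)%nat ->
  Rabs (ratio m (block_start m s + q) - phi) <= 3/20 * (4/5) ^ q.
Proof.
  intros Hs. pose proof phi_bounds.
  assert (HF : forall q, (q < fib_len s)%nat ->
                in_range (3/2) (17/10) (ratio m (block_start m s + q)))
    by (intros q' Hq'; apply fib_ratio_bounds; lia).
  induction q as [q IH] using lt_wf_ind. intros Hq.
  destruct q as [|[|q]].
  - apply Rabs_le. destruct (HF 0%nat Hq). simpl. lra.
  - apply Rabs_le. destruct (HF 1%nat Hq). simpl. lra.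
  - pose proof (block_start_ge m s).
    rewrite ratio_fib by lia.
    replace (block_start m s + S (S q) - 1)%nat with (block_start m s + S q)%nat by lia.
    replace (block_start m s + S (S q) - 2)%nat with (block_start m s + q)%nat by lia.
    eapply Rle_trans; [apply recur_2_contract; apply HF; lia|].
    pose proof (IH (S q) ltac:(lia) ltac:(lia)) as A1.
    pose proof (IH q ltac:(lia) ltac:(lia)) as A2.
    assert (0 < (4/5) ^ q) by (apply pow_lt; lra).
    simpl pow in A1 |- *.
    assert (Rmax (Rabs (ratio m (block_start m s + S q) - phi))
              (Rabs (ratio m (block_start m s + q) - phi)) <= 3/20 * (4/5) ^ q)
      by (apply Rmax_lub; nra).
    nra.
Qed.

Lemma ratio_before_window_lim d : (1 <= d <= 2)%nat ->
  is_lim_seq (fun s => ratio m (window m s - d)) phi.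
Proof.
  intros Hd. apply is_lim_seq_incr_1.
  apply (is_lim_seq_of_dist_le _ (fun s => 3/20 * (4/5) ^ s)).
  - intro s.
    replace (window m (S s) - d)%nat with (block_start m (S s) + (s + (7 - d)))%nat
      by (unfold window, fib_len; lia).
    eapply Rle_trans; [apply fib_ratio_near_phi; unfold fib_len; lia|].
    rewrite pow_add.
    assert (0 < (4/5) ^ s) by (apply pow_lt; lra).
    assert ((4/5) ^ (7 - d) <= 1) by (rewrite <- (pow1 (7 - d)); apply pow_incr; lra).
    nra.
  - assert (G : is_lim_seq (fun s => (4/5) ^ s) 0)
      by (apply is_lim_seq_geom; rewrite Rabs_right; lra).
    apply (is_lim_seq_scal_l _ (3/20)) in G. simpl in G. now rewrite Rmult_0_r in G.
Qed.

End FibonacciPhase.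

(* The limits along a window are driven by [u ↦ (3 + 2 u) / (2 + u)], whose
   attracting fixed point is [√3]. *)
Fixpoint sqrt3_approx (t : nat) : R :=
  match t with
  | O => phi
  | S t' => (3 + 2 * sqrt3_approx t') / (2 + sqrt3_approx t')
  end.

Lemma sqrt3_bounds : 1732/1000 < sqrt 3 < 17321/10000.
Proof. pose proof (sqrt_sqrt 3 ltac:(lra)). pose proof (sqrt_pos 3). split; nra. Qed.

Lemma sqrt3_step_bounds u : phi <= u < sqrt 3 -> u < (3 + 2 * u) / (2 + u) < sqrt 3.
Proof.
  intros [H1 H2]. pose proof phi_bounds. pose proof sqrt3_bounds.
  pose proof (sqrt_sqrt 3 ltac:(lra)).
  assert (E : (3 + 2 * u) / (2 + u) * (2 + u) = 3 + 2 * u) by (field; lra).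
  set (v := (3 + 2 * u) / (2 + u)) in *.
  assert (u * u < 3) by nra.
  split; nra.
Qed.

Lemma sqrt3_approx_bounds t : phi <= sqrt3_approx t < sqrt 3.
Proof.
  pose proof phi_bounds. pose proof sqrt3_bounds.
  induction t as [|t IH]; cbn [sqrt3_approx]; [lra|].
  pose proof (sqrt3_step_bounds _ IH). lra.
Qed.

Lemma sqrt3_approx_pos t : 0 < sqrt3_approx t.
Proof. pose proof (sqrt3_approx_bounds t). pose proof phi_bounds. lra. Qed.

Lemma sqrt3_approx_lt_succ t : sqrt3_approx t < sqrt3_approx (S t).
Proof. apply sqrt3_step_bounds, sqrt3_approx_bounds. Qed.

Lemma sqrt3_approx_gap t : sqrt 3 - sqrt3_approx t <= (1/10) ^ t.
Proof.
  pose proof phi_bounds. pose proof sqrt3_bounds. pose proof (sqrt_sqrt 3 ltac:(lra)).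
  induction t as [|t IH]; cbn [sqrt3_approx pow]; [lra|].
  pose proof (sqrt3_approx_bounds t) as [I1 I2].
  set (u := sqrt3_approx t) in *.
  (* the error contracts by the factor [(2 - √3) / (2 + u) < 1/10] *)
  replace (sqrt 3 - (3 + 2 * u) / (2 + u)) with ((2 - sqrt 3) * (sqrt 3 - u) / (2 + u))
    by (field_simplify_eq; [nra | lra]).
  assert (0 < (1/10) ^ t) by (apply pow_lt; lra).
  apply Rle_div_l; nra.
Qed.

Lemma sqrt3_approx_lim : is_lim_seq sqrt3_approx (sqrt 3).
Proof.
  apply (is_lim_seq_of_dist_le _ (fun t => (1/10) ^ t)).
  - intro t. pose proof (sqrt3_approx_gap t). pose proof (sqrt3_approx_bounds t).
    rewrite Rabs_left1 by lra. lra.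
  - apply is_lim_seq_geom. rewrite Rabs_right; lra.
Qed.

Definition delta_value (m : nat) : R := 3 / sqrt3_approx (S m).

Section WindowLimits.
Variable m : nat.

Definition window_limits (t : nat) : Prop :=
  is_lim_seq (fun s => ratio m (window m s + 3 * t - 1)) (1 + / sqrt3_approx t) /\
  is_lim_seq (fun s => ratio m (window m s + 3 * t - 2)) (sqrt3_approx t).

Lemma window_limits_0 : window_limits 0.
Proof.
  split; cbn [sqrt3_approx]; [rewrite phi_inv|].
  - apply (is_lim_seq_ext (fun s => ratio m (window m s - 1)));
      [intro s; f_equal; lia | apply ratio_before_window_lim; lia].
  - apply (is_lim_seq_ext (fun s => ratio m (window m s - 2)));
      [intro s; f_equal; lia | apply ratio_before_window_lim; lia].
Qed.

Lemma lim_ratio_window_0 t : (t <= m)%nat -> window_limits t ->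
  is_lim_seq (fun s => ratio m (window m s + 3 * t))
    ((2 + sqrt3_approx t) / (1 + sqrt3_approx t)).
Proof.
  intros Ht [L1 L2]. pose proof (sqrt3_approx_pos t).
  eapply is_lim_seq_ext; [intro s; symmetry; apply ratio_window_0, Ht|].
  replace ((2 + sqrt3_approx t) / (1 + sqrt3_approx t)) with (2 - / (1 + / sqrt3_approx t))
    by (field; lra).
  apply is_lim_seq_two_sub_inv; [exact L1|].
  assert (0 < / sqrt3_approx t) by (apply Rinv_0_lt_compat; lra). lra.
Qed.

Lemma lim_ratio_window_1 t : (t <= m)%nat -> window_limits t ->
  is_lim_seq (fun s => ratio m (window m s + 3 * t + 1)) (sqrt3_approx (S t)).
Proof.
  intros Ht Hl. pose proof (lim_ratio_window_0 t Ht Hl) as L0. destruct Hl as [L1 L2].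
  pose proof (sqrt3_approx_pos t). set (u := sqrt3_approx t) in *.
  eapply is_lim_seq_ext; [intro s; symmetry; apply ratio_window_1, Ht|].
  replace (sqrt3_approx (S t)) with (2 - / ((2 + u) / (1 + u) * (1 + / u) * u))
    by (cbn [sqrt3_approx]; fold u; field; lra).
  apply is_lim_seq_two_sub_inv;
    [apply is_lim_seq_mult'; [apply is_lim_seq_mult'|]; assumption|].
  replace ((2 + u) / (1 + u) * (1 + / u) * u) with (2 + u) by (field; lra). lra.
Qed.

Lemma lim_ratio_window_2 t : (t < m)%nat -> window_limits t ->
  is_lim_seq (fun s => ratio m (window m s + 3 * t + 2)) (1 + / sqrt3_approx (S t)).
Proof.
  intros Ht Hl. pose proof (lim_ratio_window_0 t ltac:(lia) Hl) as L0.
  pose proof (lim_ratio_window_1 t ltac:(lia) Hl) as L1.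
  pose proof (sqrt3_approx_pos t). set (u := sqrt3_approx t) in *.
  eapply is_lim_seq_ext; [intro s; symmetry; apply ratio_window_2, Ht|].
  replace (1 + / sqrt3_approx (S t)) with (2 - / (sqrt3_approx (S t) * ((2 + u) / (1 + u))))
    by (cbn [sqrt3_approx]; fold u; field; lra).
  apply is_lim_seq_two_sub_inv; [now apply is_lim_seq_mult'|].
  cbn [sqrt3_approx]; fold u.
  replace ((3 + 2 * u) / (2 + u) * ((2 + u) / (1 + u))) with ((3 + 2 * u) / (1 + u))
    by (field; lra).
  apply Rgt_not_eq, Rdiv_lt_0_compat; lra.
Qed.

Lemma window_limits_all t : (t <= m)%nat -> window_limits t.
Proof.
  induction t as [|t IH]; intros Ht; [exact window_limits_0|].
  specialize (IH ltac:(lia)). split.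
  - apply (is_lim_seq_ext (fun s => ratio m (window m s + 3 * t + 2)));
      [intro s; f_equal; lia | apply lim_ratio_window_2; [lia | exact IH]].
  - apply (is_lim_seq_ext (fun s => ratio m (window m s + 3 * t + 1)));
      [intro s; f_equal; lia | apply lim_ratio_window_1; [lia | exact IH]].
Qed.

Lemma lim_ratio_window_end :
  is_lim_seq (fun s => ratio m (window m s + 3 * m + 2)) (delta_value m).
Proof.
  pose proof (window_limits_all m (le_n m)) as Hl.
  pose proof (lim_ratio_window_0 m (le_n m) Hl) as L0.
  pose proof (lim_ratio_window_1 m (le_n m) Hl) as L1. destruct Hl as [L2 _].
  pose proof (sqrt3_approx_pos m). set (u := sqrt3_approx m) in *.
  eapply is_lim_seq_ext; [intro s; symmetry; apply ratio_window_end|].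
  unfold delta_value.
  replace (3 / sqrt3_approx (S m))
    with (2 - / (sqrt3_approx (S m) * ((2 + u) / (1 + u)) * (1 + / u)))
    by (cbn [sqrt3_approx]; fold u; field; lra).
  apply is_lim_seq_two_sub_inv;
    [apply is_lim_seq_mult'; [apply is_lim_seq_mult'|]; assumption|].
  cbn [sqrt3_approx]; fold u.
  replace ((3 + 2 * u) / (2 + u) * ((2 + u) / (1 + u)) * (1 + / u)) with ((3 + 2 * u) / u)
    by (field; lra).
  apply Rgt_not_eq, Rdiv_lt_0_compat; lra.
Qed.

End WindowLimits.

(** * The limsup *)

Lemma delta_value_gt_sqrt3 m : sqrt 3 < delta_value m.
Proof.
  pose proof (sqrt3_approx_bounds (S m)). pose proof (sqrt3_approx_pos (S m)).
  pose proof sqrt3_bounds. pose proof (sqrt_sqrt 3 ltac:(lra)).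
  unfold delta_value. apply Rlt_div_r; nra.
Qed.

Lemma delta_value_decreasing m : delta_value (S m) < delta_value m.
Proof.
  pose proof (sqrt3_approx_lt_succ (S m)). pose proof (sqrt3_approx_pos (S m)).
  unfold delta_value. apply Rmult_lt_compat_l; [lra|]. apply Rinv_lt_contravar; nra.
Qed.

Lemma delta_value_lim : is_lim_seq delta_value (sqrt 3).
Proof.
  pose proof sqrt3_bounds. pose proof (sqrt_sqrt 3 ltac:(lra)).
  assert (L : is_lim_seq (fun m => / sqrt3_approx (S m)) (/ sqrt 3)).
  { apply is_lim_seq_Rinv; [|lra].
    apply (is_lim_seq_incr_1 sqrt3_approx), sqrt3_approx_lim. }
  apply (is_lim_seq_scal_l _ 3) in L. simpl in L.
  replace (sqrt 3) with (3 * / sqrt 3) by (field_simplify_eq; lra).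
  exact L.
Qed.

Lemma eventually_forall_le (P : nat -> nat -> Prop) (M : nat) :
  (forall q, (q <= M)%nat -> eventually (fun s => P s q)) ->
  eventually (fun s => forall q, (q <= M)%nat -> P s q).
Proof.
  induction M as [|M IH]; intros H.
  - destruct (H 0%nat (le_n 0)) as [N HN]. exists N.
    intros s Hs q Hq. replace q with 0%nat by lia. now apply HN.
  - destruct IH as [N1 H1]; [intros q Hq; apply H; lia|].
    destruct (H (S M) (le_n _)) as [N2 H2]. exists (Nat.max N1 N2).
    intros s Hs q Hq. destruct (Nat.eq_dec q (S M)) as [->|]; [apply H2 | apply H1]; lia.
Qed.

Section LimSup.
Variable m : nat.

Lemma window_lim_le_delta q : (q <= 3 * m + 2)%nat ->
  exists L, L <= delta_value m /\ is_lim_seq (fun s => ratio m (window m s + q)) L.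
Proof.
  intros Hq. pose proof (delta_value_gt_sqrt3 m). pose proof sqrt3_bounds.
  pose proof phi_bounds.
  destruct (Nat.lt_ge_cases q (3 * m + 2)) as [Hlt | Hge].
  2:{ exists (delta_value m). split; [lra|].
      replace q with (3 * m + 2)%nat by lia.
      apply (is_lim_seq_ext (fun s => ratio m (window m s + 3 * m + 2)));
        [intro s; f_equal; lia | apply lim_ratio_window_end]. }
  set (t := (q / 3)%nat). pose proof (Nat.div_mod q 3 ltac:(lia)) as Hd.
  pose proof (Nat.mod_upper_bound q 3 ltac:(lia)). fold t in Hd.
  assert (Ht : (t <= m)%nat) by lia.
  pose proof (sqrt3_approx_bounds t). pose proof (sqrt3_approx_bounds (S t)).
  destruct (q mod 3) as [|[|[|]]] eqn:Hr; try lia.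
  - exists ((2 + sqrt3_approx t) / (1 + sqrt3_approx t)). split.
    + apply Rle_div_l; nra.
    + apply (is_lim_seq_ext (fun s => ratio m (window m s + 3 * t)));
        [intro s; f_equal; lia | apply lim_ratio_window_0, window_limits_all; lia].
  - exists (sqrt3_approx (S t)). split; [lra|].
    apply (is_lim_seq_ext (fun s => ratio m (window m s + 3 * t + 1)));
      [intro s; f_equal; lia | apply lim_ratio_window_1, window_limits_all; lia].
  - exists (1 + / sqrt3_approx (S t)). split.
    + assert (/ sqrt3_approx (S t) <= / phi) by (apply Rinv_le_contravar; lra).
      pose proof phi_inv. lra.
    + apply (is_lim_seq_ext (fun s => ratio m (window m s + 3 * t + 2)));
        [intro s; f_equal; lia | apply lim_ratio_window_2, window_limits_all; lia].
Qed.

Lemma position_late k s0 : (block_start m s0 <= k)%nat -> exists s, (s0 <= s)%nat /\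
  ((exists q, (q < fib_len s)%nat /\ k = (block_start m s + q)%nat) \/
   (exists q, (q <= 3 * m + 2)%nat /\ k = (window m s + q)%nat)).
Proof.
  intros Hk. pose proof (block_start_ge m s0).
  destruct (position_cases m k ltac:(lia)) as [s Hs]. exists s.
  assert (Hlt : (k < block_start m (S s))%nat).
  { rewrite block_start_succ.
    destruct Hs as [[q [Hq ->]] | [t [r [Ht [Hr ->]]]]]; unfold window; lia. }
  split.
  - destruct (Nat.lt_ge_cases s s0) as [Hss | ]; [|assumption].
    pose proof (block_start_mono m (S s) s0 Hss). lia.
  - destruct Hs as [Hfib | [t [r [Ht [Hr ->]]]]]; [now left | right].
    exists (3 * t + r)%nat. split; lia.
Qed.

Theorem len_ratio_limsup :
  is_LimSup_seq (fun i => INR (len m (S i)) / INR (len m i)) (delta_value m).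
Proof.
  intros eps. pose proof (cond_pos eps). split.
  - intros N. pose proof (lim_ratio_window_end m) as Hend.
    apply is_lim_seq_spec in Hend. destruct (Hend eps) as [S0 HS0].
    exists (window m (Nat.max S0 N) + 3 * m + 2)%nat. split.
    + pose proof (window_ge m (Nat.max S0 N)). lia.
    + specialize (HS0 (Nat.max S0 N) ltac:(lia)). apply Rabs_lt_between' in HS0.
      unfold ratio in HS0. lra.
  - destruct (eventually_forall_le
      (fun s q => ratio m (window m s + q) < delta_value m + eps) (3 * m + 2)) as [S0 HS0].
    { intros q Hq. destruct (window_lim_le_delta q Hq) as [L [HL Hlim]].
      apply is_lim_seq_spec in Hlim. destruct (Hlim eps) as [S1 HS1].
      exists S1. intros s Hs. specialize (HS1 s Hs). apply Rabs_lt_between' in HS1. lra. }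
    exists (block_start m (S S0)). intros i Hi.
    destruct (position_late i (S S0) Hi) as [s [Hs [[q [Hq ->]] | [q [Hq ->]]]]].
    + pose proof (fib_ratio_bounds m s q ltac:(lia) Hq) as [_ Hb].
      pose proof (delta_value_gt_sqrt3 m). pose proof sqrt3_bounds.
      unfold ratio in Hb. lra.
    + apply (HS0 s); lia.
Qed.

End LimSup.

Lemma delta_value_in_D0 m : (1 <= m)%nat -> D0 (delta_value m).
Proof.
  intros Hm. exists nat, (fam_word m), (len m).
  pose proof (fam_abundant m Hm) as Hab.
  split; [exact Hab|]. split; [exact (proj1 Hab) | apply len_ratio_limsup].
Qed.

Theorem proposition7p5 :
  exists u : nat -> R,
    (forall k : nat, D0 (u k)) /\
    (forall k : nat, u (S k) < u k) /\
    is_lim_seq u (sqrt 3).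
Proof.
  exists (fun k => delta_value (S k)). split; [|split].
  - intros k. apply delta_value_in_D0. lia.
  - intros k. apply delta_value_decreasing.
  - apply (is_lim_seq_incr_1 delta_value), delta_value_lim.
Qed.
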